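(* Let $M$ be a matroid on ground set $E=\{1,\dots,n\}$, let $x^*\in P_B(M)$, and let $F\subseteq P_B(M)$ be the unique face of $P_B(M)$ of minimal affine dimension containing $x^*$, with $\dim(F)=d$. Then there exists a basis $B$ of $M$ with $\chi(B)\in F$ and \[ \|\chi(B)-x^*\|_1\le d. \]
   Context: $\chi(S)\in\{0,1\}^n$ denotes the characteristic vector of $S\subseteq E$. $P_B(M)$ is the base polytope, the convex hull of the characteristic vectors of all bases of $M$. *)

From mathcomp Require Import all_boot all_order all_algebra.
Set Implicit Arguments. Unset Strict Implicit. Unset Printing Implicit Defensive.
Import Order.TTheory GRing.Theory Num.Theory.
Local Open Scope ring_scope.

(* Ground set E = {1,...,n} is represented by 'I_n = {0,...,n-1}. *)

Definition is_matroid_bases (n : nat) (Bs : {set {set 'I_n}}) : Prop :=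
  Bs != set0 /\
  forall B1 B2, B1 \in Bs -> B2 \in Bs ->
    forall x, x \in B1 :\: B2 ->
      exists2 y, y \in B2 :\: B1 & (B1 :\ x) :|: [set y] \in Bs.

Definition chi (R : realFieldType) (n : nat) (S : {set 'I_n}) : 'rV[R]_n :=
  \row_i (if i \in S then 1 else 0).

Definition base_polytope (R : realFieldType) (n : nat) (Bs : {set {set 'I_n}})
  (x : 'rV[R]_n) : Prop :=
  exists lam : {set 'I_n} -> R,
    (forall B, B \in Bs -> 0 <= lam B) /\
    \sum_(B in Bs) lam B = 1 /\
    x = \sum_(B in Bs) lam B *: chi R B.

Definition dotr (R : realFieldType) (n : nat) (c x : 'rV[R]_n) : R :=
  \sum_i c 0 i * x 0 i.

Definition is_face (R : realFieldType) (n : nat) (P F : 'rV[R]_n -> Prop) : Prop :=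
  exists (c : 'rV[R]_n) (delta : R),
    (forall x, P x -> dotr c x <= delta) /\
    (forall x, F x <-> (P x /\ dotr c x = delta)).

Definition aff_indep (R : realFieldType) (n k : nat) (p : 'I_k.+1 -> 'rV[R]_n) : bool :=
  \rank (\matrix_(i < k) (p (lift ord0 i) - p ord0)) == k.

Definition affdim (R : realFieldType) (n : nat) (S : 'rV[R]_n -> Prop) (d : nat) : Prop :=
  (exists p : 'I_d.+1 -> 'rV[R]_n, (forall i, S (p i)) /\ aff_indep p) /\
  (forall k (p : 'I_k.+1 -> 'rV[R]_n), (forall i, S (p i)) -> aff_indep p -> (k <= d)%N).

Definition norm1 (R : realFieldType) (n : nat) (v : 'rV[R]_n) : R :=
  \sum_i `|v 0 i|.

From mathcomp Require Import all_boot all_order all_algebra.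
From mathcomp Require Import ring lra.
Import Order.TTheory GRing.Theory Num.Theory.
Set Implicit Arguments. Unset Strict Implicit. Unset Printing Implicit Defensive.
Local Open Scope ring_scope.

(* Write [xs] as a convex combination of bases. Every basis in its support lies
   on the face F, and so does every basis obtained from a support basis B0 by a
   symmetric exchange with another basis on F. If e \in B0 and xs_e < 1, some
   support basis misses e and the exchange yields a basis B0 - e + y on F;
   together with chi(B0) these points are affinely independent, so there are at
   most d such e. Likewise at most d elements e \notin B0 have xs_e > 0, so xs
   has at most 2d fractional coordinates. The average of |chi(B) - xs|_1 over
   the support is sum_i 2 xs_i (1 - xs_i), at most 1/2 per fractional
   coordinate, hence at most d, and some support basis does no worse. *)

Section SymmetricExchange.
Variables (n : nat) (Bs : {set {set 'I_n}}).
Hypothesis hM : is_matroid_bases Bs.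

Let exchange := proj2 hM.

Lemma exchange_walk (T K : {set 'I_n}) (P : {set 'I_n} -> Prop) :
  T \in Bs ->
  (forall B f g, B \in Bs -> K \subset B -> P B -> f \in B :\: (T :|: K) ->
     g \in T :\: B -> B :\ f :|: [set g] \in Bs -> P (B :\ f :|: [set g])) ->
  forall B, B \in Bs -> K \subset B -> P B ->
  exists B', [/\ B' \in Bs, K \subset B', P B' & B' :\: T \subset K].
Proof.
move=> hT step B; have [m] := ubnP #|B :\: T|.
elim: m B => // m IH B lt_m hB hK hP.
have [|/subsetPn [f fBT fK]] := boolP (B :\: T \subset K); first by exists B.
have [fT fB] : f \notin T /\ f \in B by move: fBT; rewrite inE => /andP.
have [g gTB hB'] := exchange hB hT fBT.
have gT : g \in T by move: gTB; rewrite inE => /andP [].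
have hK' : K \subset B :\ f :|: [set g].
  apply/subsetP => z zK; rewrite !inE (subsetP hK) // andbT.
  by case: eqP zK fK => // -> ->.
have hP' : P (B :\ f :|: [set g]) by apply: step; rewrite // !inE negb_or fT fK.
apply: IH hB' hK' hP'; rewrite -ltnS (leq_trans _ lt_m) // ltnS.
have -> : (B :\ f :|: [set g]) :\: T = (B :\: T) :\ f.
  apply/setP => z; rewrite !inE.
  by have [->|_] := eqVneq z g; [rewrite gT andbF | rewrite orbF andbCA].
by rewrite [#|B :\: T|](cardsD1 f) fBT.
Qed.

Definition fund_circuit (B : {set 'I_n}) x := x |: [set z in B | B :\ z :|: [set x] \in Bs].

Lemma fund_circuit_dependent B0 x B :
  B0 \in Bs -> x \notin B0 -> B \in Bs -> ~~ (fund_circuit B0 x \subset B).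
Proof.
move=> hB0 xB0 hB; apply/negP => hC.
have [B' [hB' hCB' _ hB'B0]] :=
  exchange_walk (P := fun _ => True) hB0 (fun _ _ _ _ _ _ _ _ _ => I) hB hC I.
have xB' : x \in B' by rewrite (subsetP hCB') ?setU11.
have [/subsetP sB0B'|/subsetPn [f fB0 fB']] := boolP (B0 \subset B').
  have xB'B0 : x \in B' :\: B0 by rewrite inE xB' xB0.
  have [y] := exchange hB' hB0 xB'B0.
  by rewrite inE => /andP [yB' /sB0B' yB'']; rewrite yB'' in yB'.
have fB0B' : f \in B0 :\: B' by rewrite inE fB0 fB'.
have [y yB'B0 hf] := exchange hB0 hB' fB0B'.
have := subsetP hB'B0 _ yB'B0; rewrite !inE => /orP [/eqP eyx|/andP [yB0 _]]; last first.
  by move: yB'B0; rewrite inE yB0.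
subst y; case/negP: fB'; apply: (subsetP hCB').
by rewrite !inE fB0 hf orbT.
Qed.

Lemma sym_exchange B1 B2 x :
  B1 \in Bs -> B2 \in Bs -> x \in B1 :\: B2 ->
  exists2 y, y \in B2 :\: B1 &
    (B1 :\ x :|: [set y] \in Bs) && (B2 :\ y :|: [set x] \in Bs).
Proof.
move=> hB1 hB2 xB1B2; have := xB1B2; rewrite inE => /andP [xB2 xB1].
pose Z := [set z in B2 | B2 :\ z :|: [set x] \in Bs].
have hZ : Z \subset B2 by apply/subsetP => z; rewrite inE => /andP [].
(* Walking from B2 towards B1 never brings x in: it would complete the circuit x + Z. *)
have step B f g : B \in Bs -> Z \subset B -> x \notin B -> f \in B :\: (B1 :|: Z) ->
    g \in B1 :\: B -> B :\ f :|: [set g] \in Bs -> x \notin B :\ f :|: [set g].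
  move=> hB ZB xB fB gB1B hB'; rewrite !inE (negbTE xB) andbF /=; apply/eqP => egx.
  subst g; case/negP: (fund_circuit_dependent hB2 xB2 hB'); apply/subsetP => z.
  rewrite /fund_circuit -/Z !inE => /orP [->|zZ]; first by rewrite orbT.
  have {}zZ : z \in Z by rewrite inE.
  rewrite (subsetP ZB) // andbT; apply/orP; left.
  by apply: contraTneq fB => <-; rewrite inE in_setU zZ orbT.
have [B' [hB' ZB' xB' hB'B1]] := exchange_walk hB1 step hB2 hZ xB2.
have xB1B' : x \in B1 :\: B' by rewrite inE xB' xB1.
have [y yB'B1 hB1'] := exchange hB1 hB' xB1B'.
have := subsetP hB'B1 _ yB'B1; rewrite inE => /andP [yB2 hB2'].
move: yB'B1; rewrite inE => /andP [yB1 _].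
by exists y; rewrite ?inE ?yB1 ?yB2 ?hB1' ?hB2'.
Qed.
End SymmetricExchange.

Section ConvexWeights.
Variables (R : realDomainType) (I : finType) (S : {set I}) (lam : I -> R).
Hypotheses (lam_ge0 : forall i, i \in S -> 0 <= lam i) (lam_sum1 : \sum_(i in S) lam i = 1).

Lemma exists_support_pred (b : pred I) :
  \sum_(i in S) lam i * (b i)%:R != 0 -> exists2 i, (i \in S) && (0 < lam i) & b i.
Proof.
move=> /eqP sum_neq0.
have ge0 i : i \in S -> 0 <= lam i * (b i)%:R by move=> Si; rewrite mulr_ge0 ?lam_ge0.
have [i /andP [Si]] := psumr_neq0P ge0 sum_neq0.
by case bi: (b i); rewrite /= ?mulr1 ?mulr0 ?ltxx // => lam_gt0; exists i; rewrite ?Si.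
Qed.

Lemma exists_support : exists2 i, i \in S & 0 < lam i.
Proof.
have [|i /andP [Si lam_gt0] _] := exists_support_pred (b := predT); last by exists i.
by under eq_bigr do rewrite mulr1; rewrite lam_sum1 oner_neq0.
Qed.

Lemma convex_support_eq_max (f : I -> R) a :
  (forall i, i \in S -> f i <= a) -> \sum_(i in S) lam i * f i = a ->
  forall i, i \in S -> 0 < lam i -> f i = a.
Proof.
move=> le_a sum_a i Si lam_gt0.
have ge0 j : j \in S -> 0 <= lam j * (a - f j).
  by move=> Sj; rewrite mulr_ge0 ?lam_ge0 // subr_ge0 le_a.
have sum0 : \sum_(j in S) lam j * (a - f j) = 0.
  by under eq_bigr do rewrite mulrBr; rewrite sumrB -mulr_suml lam_sum1 mul1r sum_a subrr.
by have /eqP := psumr_eq0P ge0 sum0 Si; rewrite mulf_eq0 gt_eqF //= subr_eq0 => /eqP.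
Qed.

Lemma convex_exists_le (f : I -> R) a :
  \sum_(i in S) lam i * f i <= a -> exists2 i, (i \in S) && (0 < lam i) & f i <= a.
Proof.
move=> le_a; have [|/exists_inPn far] := boolP [exists i in S, (0 < lam i) && (f i <= a)].
  by case/exists_inP => i Si /andP [lam_gt0 le_fa]; exists i; rewrite ?Si.
have ge0 j : j \in S -> 0 <= lam j * (f j - a).
  move=> Sj; have := lam_ge0 Sj; rewrite le_eqVlt => /predU1P [<-|lam_gt0].
    by rewrite mul0r.
  apply: mulr_ge0; first exact: ltW.
  by rewrite subr_ge0 ltW // ltNge; have := far j Sj; rewrite lam_gt0.
have sum0 : \sum_(j in S) lam j * (f j - a) = 0.
  apply/eqP; rewrite eq_le sumr_ge0 // andbT.
  by under eq_bigr do rewrite mulrBr; rewrite sumrB -mulr_suml lam_sum1 mul1r subr_le0.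
have [i Si lam_gt0] := exists_support.
have /eqP := psumr_eq0P ge0 sum0 Si; rewrite mulf_eq0 gt_eqF //= subr_eq0 => /eqP fa.
by have := far i Si; rewrite lam_gt0 fa lexx.
Qed.

End ConvexWeights.

Lemma sumr_indicator (R : pzSemiRingType) (T : finType) (A : {set T}) :
  \sum_i ((i \in A)%:R : R) = #|A|%:R.
Proof.
rewrite -sum1_card natr_sum [RHS]big_mkcond.
by apply: eq_bigr => i _; case: (i \in A).
Qed.

Lemma double_mul_compl_le (R : realFieldType) (t : R) :
  0 <= t <= 1 -> 2 * t * (1 - t) <= (0 < t < 1)%R%:R / 2.
Proof.
case/andP => t_ge0 t_le1.
have [->|t0] := eqVneq t 0; first by rewrite ltxx /= !(mulr0, mul0r).
have [->|t1] := eqVneq t 1; first by rewrite ltxx andbF /= subrr !(mulr0, mul0r).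
rewrite lt_neqAle eq_sym t0 t_ge0 lt_neqAle t1 t_le1 /=.
by have := sqr_ge0 (2 * t - 1); rewrite expr2; nra.
Qed.

Section Vectors.
Variables (R : realFieldType) (n : nat).

Lemma chiE (B : {set 'I_n}) i : chi R B 0 i = (i \in B)%:R.
Proof. by rewrite mxE; case: (i \in B). Qed.

Lemma chi_swap (B1 B2 : {set 'I_n}) x y :
  x \in B1 :\: B2 -> y \in B2 :\: B1 ->
  chi R (B1 :\ x :|: [set y]) + chi R (B2 :\ y :|: [set x]) = chi R B1 + chi R B2.
Proof.
rewrite !inE => /andP [xB2 xB1] /andP [yB1 yB2]; apply/matrixP => i j; rewrite !mxE !inE.
have xy : (x == y) = false by apply/eqP => exy; move: yB1; rewrite -exy xB1.
have [->|jx] := eqVneq j x; first by rewrite xB1 (negbTE xB2) xy /= addrC.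
have [->|jy] := eqVneq j y; first by rewrite yB2 (negbTE yB1) /= addrC.
by rewrite !orbF.
Qed.

Lemma dotrD (c u v : 'rV[R]_n) : dotr c (u + v) = dotr c u + dotr c v.
Proof. by rewrite /dotr -big_split; apply: eq_bigr => i _; rewrite mxE mulrDr. Qed.

Lemma dotr_sum (I : finType) (P : pred I) c (a : I -> R) (v : I -> 'rV[R]_n) :
  dotr c (\sum_(k | P k) a k *: v k) = \sum_(k | P k) a k * dotr c (v k).
Proof.
rewrite /dotr; under eq_bigr do rewrite summxE mulr_sumr.
rewrite exchange_big; apply: eq_bigr => k _; rewrite mulr_sumr.
by apply: eq_bigr => i _; rewrite mxE mulrCA.
Qed.

Lemma card_le_affdim (F : 'rV[R]_n -> Prop) d (A : {set 'I_n}) p0 p s :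
  affdim F d -> s != 0 -> F p0 -> (forall e, e \in A -> F (p e)) ->
  (forall e e', e \in A -> e' \in A -> p e 0 e' - p0 0 e' = (e == e')%:R * s) ->
  (#|A| <= d)%N.
Proof.
move=> [_ maxF] s0 Fp0 Fp pE.
pose q (j : 'I_#|A|.+1) := if unlift ord0 j is Some i then p (enum_val i) else p0.
apply: (maxF _ q) => [j|].
  by rewrite /q; case: unliftP => [i _|_]; [apply/Fp/enum_valP | ].
rewrite /aff_indep; set M := \matrix_(i < #|A|) _.
pose N := \matrix_(c < n, j < #|A|) ((c == enum_val j)%:R / s) : 'M[R]_(n, #|A|).
have MN1 : M *m N = 1%:M.
  apply/matrixP => i j; rewrite !mxE (bigD1 (enum_val j)) //= big1 ?addr0; last first.
    by move=> c /negbTE cj; rewrite !mxE cj mul0r mulr0.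
  rewrite !mxE eqxx mul1r /q liftK unlift_none pE ?enum_valP // (inj_eq enum_val_inj).
  by case: eqP => _; rewrite ?mul1r ?divff ?mul0r.
by rewrite /aff_indep eqn_leq rank_leq_row -{1}(mxrank1 R #|A|) -MN1 mxrankM_maxl.
Qed.

Lemma chi_base_polytope (Bs : {set {set 'I_n}}) B :
  B \in Bs -> base_polytope Bs (chi R B).
Proof.
move=> hB; exists (fun B' => (B' == B)%:R); split; first by move=> B' _; case: eqP.
by split; rewrite (bigD1 B) //= eqxx ?scale1r big1 ?addr0 // => B' /andP [_ /negbTE ->];
  rewrite ?scale0r.
Qed.

End Vectors.

Section ConvexChi.
Variables (R : realFieldType) (n : nat) (Bs : {set {set 'I_n}}) (lam : {set 'I_n} -> R).
Hypotheses (lam_ge0 : forall B, B \in Bs -> 0 <= lam B) (lam_sum1 : \sum_(B in Bs) lam B = 1).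

Let x := \sum_(B in Bs) lam B *: chi R B.

Lemma convex_chiE i : x 0 i = \sum_(B in Bs) lam B * (i \in B)%:R.
Proof. by rewrite summxE; apply: eq_bigr => B _; rewrite mxE chiE. Qed.

Lemma convex_chi_ge0 i : 0 <= x 0 i.
Proof. by rewrite convex_chiE sumr_ge0 // => B hB; rewrite mulr_ge0 ?lam_ge0. Qed.

Lemma convex_chi_le1 i : x 0 i <= 1.
Proof.
rewrite convex_chiE -[leRHS]lam_sum1 ler_sum // => B hB.
by rewrite ler_piMr ?lam_ge0 //; case: (i \in B); rewrite ?lexx ?ler01.
Qed.

Lemma convex_chi_gt0 i : 0 < x 0 i -> exists2 B, (B \in Bs) && (0 < lam B) & i \in B.
Proof.
by rewrite convex_chiE => /lt0r_neq0 /(exists_support_pred lam_ge0 (b := fun B => i \in B)).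
Qed.

Lemma convex_chi_lt1 i : x 0 i < 1 -> exists2 B, (B \in Bs) && (0 < lam B) & i \notin B.
Proof.
move=> lt1; apply: (exists_support_pred lam_ge0 (b := fun B => i \notin B)).
have -> : \sum_(B in Bs) lam B * (i \notin B)%:R = 1 - x 0 i.
  rewrite convex_chiE -[X in X - _]lam_sum1 -sumrB; apply: eq_bigr => B _.
  by case: (i \in B); rewrite /= ?mulr1 ?mulr0 ?subr0 ?subrr.
by rewrite subr_eq0 eq_sym lt_eqF.
Qed.

Lemma mean_norm1_chi :
  \sum_(B in Bs) lam B * norm1 (chi R B - x) = \sum_i 2 * x 0 i * (1 - x 0 i).
Proof.
rewrite /norm1; under eq_bigr do rewrite mulr_sumr.
rewrite exchange_big; apply: eq_bigr => i _.
transitivity (\sum_(B in Bs) (lam B * (i \in B)%:R * (1 - 2 * x 0 i) + lam B * x 0 i)).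
  apply: eq_bigr => B _; rewrite mxE chiE [(- x) 0 i]mxE.
  have := convex_chi_ge0 i; have := convex_chi_le1 i.
  case: (i \in B) => /= le1 ge0; last by rewrite sub0r normrN ger0_norm //; ring.
  by rewrite ger0_norm ?subr_ge0 //; ring.
by rewrite big_split /= -!mulr_suml -convex_chiE lam_sum1; ring.
Qed.

End ConvexChi.

Section TightBases.
Variables (R : realFieldType) (n : nat) (Bs : {set {set 'I_n}}).
Hypothesis hM : is_matroid_bases Bs.
Variables (c : 'rV[R]_n) (delta : R).
Hypothesis valid : forall B, B \in Bs -> dotr c (chi R B) <= delta.

Definition tight B := (B \in Bs) && (dotr c (chi R B) == delta).

Lemma tight_sym_exchange B1 B2 x :
  tight B1 -> tight B2 -> x \in B1 :\: B2 ->
  exists2 y, y \in B2 :\: B1 &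
    tight (B1 :\ x :|: [set y]) && tight (B2 :\ y :|: [set x]).
Proof.
case/andP => hB1 /eqP t1 /andP [hB2 /eqP t2] xB.
have [y yB /andP [hB1' hB2']] := sym_exchange hM hB1 hB2 xB.
exists y => //; rewrite /tight hB1' hB2' /=.
have := congr1 (dotr c) (chi_swap R xB yB); rewrite !dotrD t1 t2.
have := valid hB1'; have := valid hB2' => le2 le1 sum2.
by apply/andP; split; apply/eqP; lra.
Qed.

Variables (F : 'rV[R]_n -> Prop) (d : nat).
Hypotheses (dimF : affdim F d) (tightF : forall B, tight B -> F (chi R B)).

Lemma card_tight_leave_le B0 : tight B0 ->
  (#|[set e in B0 | [exists B, tight B && (e \notin B)]]| <= d)%N.
Proof.
move=> tB0; set A := [set e in B0 | _].
have /fin_all_exists [y yP] : forall e, exists y,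
    e \in A -> (y \notin B0) && tight (B0 :\ e :|: [set y]).
  move=> e; case: (boolP (e \in A)) => eA; last by exists e.
  move: eA; rewrite inE => /andP [eB0 /existsP [B /andP [tB eB]]].
  have eB0B : e \in B0 :\: B by rewrite inE eB eB0.
  have [y' yB /andP [t' _]] := tight_sym_exchange tB0 tB eB0B.
  by exists y' => _; rewrite t' andbT; move: yB; rewrite inE => /andP [].
pose p e := chi R (B0 :\ e :|: [set y e]).
apply: (card_le_affdim (p0 := chi R B0) (p := p) (s := -1) dimF).
- by rewrite oppr_eq0 oner_eq0.
- exact: tightF.
- by move=> e /yP /andP [_ /tightF].
- move=> e e' eA; rewrite inE => /andP [e'B0 _]; have /andP [yB0 _] := yP e eA.
  have e'y : (e' == y e) = false by apply: contraNF yB0 => /eqP <-.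
  rewrite !chiE !inE e'B0 e'y andbT orbF eq_sym.
  by case: eqP => _ /=; rewrite ?subrr ?sub0r ?mul0r ?mul1r.
Qed.

Lemma card_tight_enter_le B0 : tight B0 ->
  (#|[set e in ~: B0 | [exists B, tight B && (e \in B)]]| <= d)%N.
Proof.
move=> tB0; set A := [set e in ~: B0 | _].
have /fin_all_exists [y yP] : forall e, exists y, e \in A -> tight (B0 :\ y :|: [set e]).
  move=> e; case: (boolP (e \in A)) => eA; last by exists e.
  move: eA; rewrite !inE => /andP [eB0 /existsP [B /andP [tB eB]]].
  have eBB0 : e \in B :\: B0 by rewrite inE eB eB0.
  by have [y' _ /andP [_ t']] := tight_sym_exchange tB tB0 eBB0; exists y'.
pose p e := chi R (B0 :\ y e :|: [set e]).
apply: (card_le_affdim (p0 := chi R B0) (p := p) (s := 1) dimF).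
- exact: oner_neq0.
- exact: tightF.
- by move=> e /yP /tightF.
- move=> e e' _; rewrite !inE => /andP [e'B0 _].
  rewrite !chiE !inE (negbTE e'B0) andbF /= eq_sym.
  by case: eqP => _ /=; rewrite ?subr0 ?mul1r ?mul0r.
Qed.

Variable lam : {set 'I_n} -> R.
Hypotheses (lam_ge0 : forall B, B \in Bs -> 0 <= lam B) (lam_sum1 : \sum_(B in Bs) lam B = 1).
Let x := \sum_(B in Bs) lam B *: chi R B.
Hypothesis tight_x : dotr c x = delta.

Lemma support_tight B : B \in Bs -> 0 < lam B -> tight B.
Proof.
move=> hB lamB; rewrite /tight hB; apply/eqP.
by apply: (convex_support_eq_max lam_ge0 lam_sum1 valid) => //; rewrite -dotr_sum.
Qed.

Lemma card_fractional_le : (#|[set i | (0 < x 0 i < 1)%R]| <= d.*2)%N.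
Proof.
have [B0 hB0 lamB0] := exists_support lam_ge0 lam_sum1.
have tB0 := support_tight hB0 lamB0.
have := leq_add (card_tight_leave_le tB0) (card_tight_enter_le tB0).
rewrite addnn; apply: leq_trans.
apply: leq_trans (leq_card_setU _ _); apply: subset_leq_card; apply/subsetP => i.
rewrite !inE => /andP [gt0 lt1]; case: (boolP (i \in B0)) => iB0 /=.
  have [B /andP [hB lamB] iB] := convex_chi_lt1 lam_ge0 lam_sum1 lt1.
  by apply/orP; left; apply/existsP; exists B; rewrite support_tight.
have [B /andP [hB lamB] iB] := convex_chi_gt0 lam_ge0 gt0.
by apply/existsP; exists B; rewrite support_tight.
Qed.

Lemma exists_tight_norm1_le : exists2 B, tight B & norm1 (chi R B - x) <= d%:R.
Proof.
suff /(convex_exists_le lam_ge0 lam_sum1) [B /andP [hB lamB] near] :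
    \sum_(B in Bs) lam B * norm1 (chi R B - x) <= d%:R.
  by exists B; rewrite ?support_tight.
rewrite mean_norm1_chi //.
apply: le_trans (_ : \sum_i ((i \in [set i | 0 < x 0 i < 1])%:R / 2) <= _).
  by apply: ler_sum => i _; rewrite inE double_mul_compl_le ?convex_chi_ge0 ?convex_chi_le1.
rewrite -mulr_suml sumr_indicator ler_pdivrMr // -natrM ler_nat muln2.
exact: card_fractional_le.
Qed.

End TightBases.

Theorem lemma5 (R : realFieldType) (n : nat) (Bs : {set {set 'I_n}})
  (hM : is_matroid_bases Bs)
  (xs : 'rV[R]_n) (hx : base_polytope Bs xs)
  (F : 'rV[R]_n -> Prop) (d : nat)
  (hF : is_face (base_polytope Bs) F) (hxF : F xs)
  (hmin : forall (G : 'rV[R]_n -> Prop) (dG : nat),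
      is_face (base_polytope Bs) G -> G xs -> affdim G dG -> (d <= dG)%N)
  (hd : affdim F d) :
  exists B, B \in Bs /\ F (chi R B) /\ norm1 (chi R B - xs) <= d%:R.
Proof.
have [lam [lam_ge0 [lam_sum1 xsE]]] := hx; subst xs.
have [c [delta [valid_c faceF]]] := hF.
have valid B : B \in Bs -> dotr c (chi R B) <= delta.
  by move=> hB; apply/valid_c/chi_base_polytope.
have tightF B : tight Bs c delta B -> F (chi R B).
  by case/andP => hB /eqP tB; apply/faceF; split => //; apply: chi_base_polytope.
have [_ tight_x] := (faceF _).1 hxF.
have [B tB near] := exists_tight_norm1_le hM valid hd tightF lam_ge0 lam_sum1 tight_x.
by exists B; split; [case/andP: tB | split; [apply: tightF |]].
Qed.
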